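(* Consider the algorithm CAB described in the context under the $\gamma$-gap assumption, and let $i_t$ be the user served at round $t$. Suppose $|\boldsymbol{u}_j^\top\boldsymbol{x}-\boldsymbol{w}_{j,t-1}^\top\boldsymbol{x}|\le\mathrm{CB}_{j,t-1}(\boldsymbol{x})$ for all $j\in\mathcal U$ and all $\boldsymbol{x}\in\mathbb R^d$. Let $\boldsymbol{x}^o\in\mathbb R^d$ be fixed and suppose $\mathrm{CB}_{j,t-1}(\boldsymbol{x}^o)<\gamma/4$ for all $j\in\mathcal U$. Then $\widehat N_{i_t,t}(\boldsymbol{x}^o)=N_{i_t}(\boldsymbol{x}^o)$.
   Context: Model. Users $\mathcal U=\{1,\dots,n\}$ with unknown unit vectors $\boldsymbol{u}_i\in\mathbb R^d$; $N_i(\boldsymbol{x})=\{j:\boldsymbol{u}_j^\top\boldsymbol{x}=\boldsymbol{u}_i^\top\boldsymbol{x}\}$. $\gamma$-gap assumption ($\gamma>0$): for all $\boldsymbol{x}$ and $i,i'$, either $\boldsymbol{u}_i^\top\boldsymbol{x}=\boldsymbol{u}_{i'}^\top\boldsymbol{x}$ or $|\boldsymbol{u}_i^\top\boldsymbol{x}-\boldsymbol{u}_{i'}^\top\boldsymbol{x}|\ge\gamma$. Algorithm CAB maintains, for each user $j$, a matrix $M_{j,s}$ (starting at $I_d$) and vector $\boldsymbol{b}_{j,s}$ (starting at $\boldsymbol0$), with $\boldsymbol{w}_{j,s}=M_{j,s}^{-1}\boldsymbol{b}_{j,s}$ and $\mathrm{CB}_{j,s}(\boldsymbol{x})=\alpha(s)\sqrt{\boldsymbol{x}^\top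 M_{j,s}^{-1}\boldsymbol{x}}$ for a positive function $\alpha$. At round $t$, for any $\boldsymbol{x}$ the estimated neighborhood of the served user $i_t$ is $\widehat N_{i_t,t}(\boldsymbol{x})=\{j\in\mathcal U:|\boldsymbol{w}_{i_t,t-1}^\top\boldsymbol{x}-\boldsymbol{w}_{j,t-1}^\top\boldsymbol{x}|\le\mathrm{CB}_{i_t,t-1}(\boldsymbol{x})+\mathrm{CB}_{j,t-1}(\boldsymbol{x})\}$. *)

(* Real scalars: an arbitrary real closed field R (needed for Num.sqrt). *)
From HB Require Import structures.
From mathcomp Require Import all_boot all_order all_algebra.
Set Implicit Arguments. Unset Strict Implicit. Unset Printing Implicit Defensive.
Import Order.TTheory GRing.Theory Num.Theory.
Local Open Scope ring_scope.

Section CAB.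
Variables (R : rcfType) (d : nat).

Definition dotv (u x : 'cV[R]_d) : R := (u^T *m x) 0 0.

Definition unit_vec (u : 'cV[R]_d) : Prop := dotv u u = 1.

(* history of a user: a sequence of (context, payoff) pairs used in its updates *)
Definition Mmat (h : seq ('cV[R]_d * R)) : 'M[R]_d :=
  1%:M + \sum_(p <- h) (p.1 *m p.1^T).
Definition bvec (h : seq ('cV[R]_d * R)) : 'cV[R]_d :=
  \sum_(p <- h) (p.2 *: p.1).
Definition west (h : seq ('cV[R]_d * R)) : 'cV[R]_d :=
  invmx (Mmat h) *m bvec h.
Definition CB (a : R) (h : seq ('cV[R]_d * R)) (x : 'cV[R]_d) : R :=
  a * Num.sqrt (dotv x (invmx (Mmat h) *m x)).

Variable n : nat.

Definition Nb (u : 'I_n -> 'cV[R]_d) (i : 'I_n) (x : 'cV[R]_d) : {set 'I_n} :=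
  [set j | dotv (u j) x == dotv (u i) x].

Definition gamma_gap (u : 'I_n -> 'cV[R]_d) (gamma : R) : Prop :=
  0 < gamma /\ forall (x : 'cV[R]_d) (i i' : 'I_n),
    dotv (u i) x = dotv (u i') x \/ gamma <= `|dotv (u i) x - dotv (u i') x|.

(* estimated neighborhood at round t, built from the statistics of round t-1;
   hist s j = the data (contexts, payoffs) defining M_{j,s} and b_{j,s} *)
Definition Nhat (alpha : nat -> R) (hist : nat -> 'I_n -> seq ('cV[R]_d * R))
  (t : nat) (it : 'I_n) (x : 'cV[R]_d) : {set 'I_n} :=
  [set j | `|dotv (west (hist t.-1 it)) x - dotv (west (hist t.-1 j)) x|
           <= CB (alpha t.-1) (hist t.-1 it) x + CB (alpha t.-1) (hist t.-1 j) x].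

End CAB.

From mathcomp Require Import all_boot all_order all_algebra.
From mathcomp Require Import lra.
Import Order.TTheory GRing.Theory Num.Theory.
Local Open Scope ring_scope.

(* If the true payoffs
   agree, the estimates are within [ci + cj] by the triangle inequality; if they
   differ, they differ by at least [gamma], and since [ci + cj < gamma / 2] the
   estimates stay more than [ci + cj] apart. *)

Section ConfidenceSeparation.
Variable R : realFieldType.
Implicit Types ai aj wi wj ci cj gamma : R.

Lemma norm_sub_le_via (a b x y : R) :
  `|a - b| <= `|a - x| + `|x - y| + `|y - b|.
Proof.
have -> : a - b = (a - x) + (x - y) + (y - b) by rewrite !addrA !subrK.
by rewrite (le_trans (ler_normD _ _)) // lerD2r ler_normD.
Qed.

Lemma estimates_close_of_eq {ai aj wi wj ci cj} :
  `|ai - wi| <= ci -> `|aj - wj| <= cj -> aj = ai -> `|wi - wj| <= ci + cj.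
Proof.
move=> Hi + Eji; rewrite Eji => Hj.
have := norm_sub_le_via wi wj ai ai.
by rewrite subrr normr0 (distrC wi ai); lra.
Qed.

Lemma estimates_far_of_gap {ai aj wi wj ci cj gamma} :
  `|ai - wi| <= ci -> `|aj - wj| <= cj ->
  ci < gamma / 4 -> cj < gamma / 4 -> gamma <= `|aj - ai| ->
  ci + cj < `|wi - wj|.
Proof.
move=> Hi Hj Ci Cj G; have := norm_sub_le_via aj ai wj wi.
by rewrite (distrC wj wi) (distrC wi ai); lra.
Qed.

Lemma estimates_close_iff_eq {ai aj wi wj ci cj gamma} :
  `|ai - wi| <= ci -> `|aj - wj| <= cj ->
  ci < gamma / 4 -> cj < gamma / 4 ->
  aj = ai \/ gamma <= `|aj - ai| ->
  (`|wi - wj| <= ci + cj) = (aj == ai).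
Proof.
move=> Hi Hj Ci Cj [Eji|G].
  by rewrite Eji eqxx (estimates_close_of_eq Hi Hj).
have /lt_geF -> := estimates_far_of_gap Hi Hj Ci Cj G.
apply/esym/eqP => Eji; move: G; rewrite Eji subrr normr0.
have := normr_ge0 (ai - wi); lra.
Qed.

End ConfidenceSeparation.

Theorem lemma5 (R : rcfType) (d n : nat) (u : 'I_n -> 'cV[R]_d) (gamma : R)
  (alpha : nat -> R) (hist : nat -> 'I_n -> seq ('cV[R]_d * R))
  (t : nat) (it : 'I_n) (xo : 'cV[R]_d) :
  (forall j, unit_vec (u j)) ->
  gamma_gap u gamma ->
  (forall s, 0 < alpha s) ->
  (forall (j : 'I_n) (x : 'cV[R]_d),
     `|dotv (u j) x - dotv (west (hist t.-1 j)) x| <= CB (alpha t.-1) (hist t.-1 j) x) ->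
  (forall j : 'I_n, CB (alpha t.-1) (hist t.-1 j) xo < gamma / 4) ->
  Nhat alpha hist t it xo = Nb u it xo.
Proof.
move=> _ [_ gap] _ conf small; apply/setP => j; rewrite !inE.
exact: estimates_close_iff_eq (conf it xo) (conf j xo) (small it) (small j) (gap xo j it).
Qed.
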